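(* Let $\tilde c_g$ be the number of numerical semigroups of genus $g$ whose Frobenius number equals $3m-1$ where $m$ is the multiplicity (equivalently, the number of NSG-compositions $x_1+\cdots+x_{m-1}$ of genus $g$ with maximum $3$ and $x_{m-1}=3$). Then $\limsup_{g\to\infty}\tilde c_g^{1/g}<\omega=\frac{1+\sqrt5}2$; i.e. $\tilde C(q)=\sum_{g\ge3}\tilde c_gq^g$ converges on an open disc of radius strictly larger than $\omega^{-1}$.
   Context: A numerical semigroup is a submonoid $S\subseteq(\mathbb N,+)$ with finite complement; genus $\#(\mathbb N\setminus S)$, multiplicity $m=\min(S\setminus\{0\})$, Frobenius number $\max(\mathbb N\setminus S)$. An NSG-composition is a composition $x_1+\cdots+x_{m-1}$ of positive integers satisfying $x_{s+t}\le x_s+x_t$ and $x_{m-s-t}\le x_{m-s}+x_{m-t}+1$ for all $s,t\ge1$, $s+t<m$; its genus is $\sum x_j$. *)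

From HB Require Import structures.
From mathcomp Require Import all_boot all_order all_algebra.
From mathcomp Require Import all_classical all_reals all_analysis.
Set Implicit Arguments. Unset Strict Implicit. Unset Printing Implicit Defensive.

(* A numerical semigroup S ⊆ ℕ is encoded by its (finite) set of gaps
   G = ℕ \ S, viewed inside the window {0,...,N-1}:  n is a gap iff
   n < N and n ∈ G.  Every n >= N is an element of S. *)
Definition in_gap (N : nat) (G : {set 'I_N}) (n : nat) : bool :=
  [exists i in G, val i == n].

(* S = ℕ \ G is a numerical semigroup: 0 ∈ S and S is closed under +.
   (Finite complement is automatic since G is finite.) *)
Definition nsg_gapset (N : nat) (G : {set 'I_N}) : bool :=
  ~~ in_gap G 0 &&
  [forall a : 'I_N, forall b : 'I_N,
     (~~ in_gap G a && ~~ in_gap G b) ==> ~~ in_gap G (a + b)].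

Definition is_multiplicity (N : nat) (G : {set 'I_N}) (m : nat) : bool :=
  [&& 0 < m, ~~ in_gap G m &
      [forall j : 'I_N, (0 < j < m) ==> in_gap G j]].

Definition is_frobenius (N : nat) (G : {set 'I_N}) (f : nat) : bool :=
  in_gap G f && [forall j : 'I_N, in_gap G j ==> (j <= f)].

(* Frobenius number = 3 m - 1 where m is the multiplicity
   (the multiplicity is at most N since N is never a gap). *)
Definition frob_is_3m_minus_1 (N : nat) (G : {set 'I_N}) : bool :=
  [exists m : 'I_N.+1, is_multiplicity G m && is_frobenius G (3 * m - 1)].

(* c~_g : number of numerical semigroups of genus g with Frobenius number
   3m-1.  Such a semigroup has the gaps 1..m-1, so m <= g+1 and all its gaps
   are <= 3m-1 <= 3g+2 < 3g+3; hence the window N = 3g+3 contains all gaps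
   and semigroups correspond bijectively to the gap sets counted here. *)
Definition tilde_c (g : nat) : nat :=
  #|[set G : {set 'I_(3 * g + 3)} |
      [&& nsg_gapset G, #|G| == g & frob_is_3m_minus_1 G]]|.

From HB Require Import structures.
From mathcomp Require Import all_boot all_order all_algebra.
From mathcomp Require Import all_classical all_reals all_analysis.
From mathcomp Require Import ring lra zify.
Import Order.TTheory GRing.Theory Num.Theory.
Set Implicit Arguments. Unset Strict Implicit. Unset Printing Implicit Defensive.

(* Let S have multiplicity m and Frobenius number 3m-1.  For 0 < i < m its
   Kunz coordinate x_i in {1,2,3} is such that i + x_i m is the least element
   of S congruent to i; then x_(m-1) = 3, S is determined by m and the x_i, and
   the residue class of i contains exactly x_i gaps.  We fold x_1 .. x_(m-2)
   into a word of letters (x_i, x_(m-1-i)), i = 1 .. (m-2)/2, leaving aside the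
   middle coordinate x_((m-1)/2).  No letter is (1,1), and if k0 is the first
   position whose letter starts with 1, the closure of S under adding the
   element k0+1+m forbids some letter pairs at distance k0+1: the folded word
   is "admissible".

   1. Transfer bound: with q = 5/8 and an explicit potential on letters, the
      admissible words of any length n have total q-weight at most 1.
   2. Counting: S |-> ((m, k0, middle), folded word) is injective, the weight
      of the word is at most the genus g, and there are at most 4(3g+4)^2 keys;
      hence c~_g <= (8/5)^g * 4(3g+4)^2.
   3. Asymptotics: the polynomial factor is eventually below (161/160)^g, so
      c~_g^(1/g) <= 161/100 < (1 + sqrt 5)/2 for all large g. *)

(* Letters are pairs (x_i, x_(m-1-i)) of values in {1,2,3}; the pair (1,1)
   is excluded since i + m and (m-1-i) + m would then both lie in S while
   their sum 3m-1 is a gap. *)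
Definition letters : seq (nat * nat) :=
  [:: (1,2); (1,3); (2,1); (2,2); (2,3); (3,1); (3,2); (3,3)]%N.

Fixpoint words (n : nat) : seq (seq (nat * nat)) :=
  if n is n'.+1 then [seq rcons w a | w <- words n', a <- letters]
  else [:: [::]].

Lemma mem_words n w : (w \in words n) = (size w == n) && all (mem letters) w.
Proof.
elim: n w => [|n IH] w; first by case: w.
apply/allpairsP/idP => [[[w' a] [/= w'n aL ->]]|].
  move: w'n; rewrite IH size_rcons eqSS all_rcons => /andP[-> ->].
  by rewrite andbT; exact: aL.
case/lastP: w => [//|w a]; rewrite size_rcons eqSS all_rcons => /andP[wn /andP[aL wL]].
by exists (w, a); rewrite /= IH wn wL.
Qed.

Lemma uniq_words n : uniq (words n).
Proof.
elim: n => [//|n IH]; apply: allpairs_uniq => //.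
by move=> [w a] [w' a'] _ _ /= /rcons_inj [-> ->].
Qed.

(* [compatible a b]: letter b may occur k0+1 positions after letter a, where
   k0 is the position of the first letter starting with 1 (see
   [admissible_at]): in the first row a 1 may not be followed by a 3, and in
   the second row a 3 may not be followed by a 1. *)
Definition compatible (a b : nat * nat) : bool :=
  ~~ ((b.1 == 3) && (a.1 == 1))%N && ~~ ((a.2 == 3) && (b.2 == 1))%N.

Definition admissible_at (k0 : nat) (w : seq (nat * nat)) (t : nat) : bool :=
  [&& (t < k0) ==> ((nth (0,0) w t).1 != 1),
      (t == k0) ==> ((nth (0,0) w t).1 == 1) &
      (k0 < t) ==> compatible (nth (0,0) w (t - k0.+1)) (nth (0,0) w t)]%N.

Definition admissible (k0 : nat) (w : seq (nat * nat)) : bool :=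
  all (admissible_at k0 w) (iota 0 (size w)).

Lemma admissible_rcons k0 w a :
  admissible k0 (rcons w a) = admissible k0 w && admissible_at k0 (rcons w a) (size w).
Proof.
rewrite /admissible size_rcons -addn1 iotaD all_cat /= andbT add0n.
congr andb; apply: eq_in_all => t; rewrite mem_iota add0n => /andP[_ ht].
rewrite /admissible_at !nth_rcons ht.
by case: (ltnP k0 t) => // _; rewrite (leq_ltn_trans (leq_subr _ _) ht).
Qed.

Definition weight (w : seq (nat * nat)) : nat := \sum_(p <- w) (p.1 + p.2)%N.

Lemma weight_rcons w a : weight (rcons w a) = (weight w + (a.1 + a.2))%N.
Proof. by rewrite /weight -cats1 big_cat /= big_seq1. Qed.

Section Transfer.
Variable R : realFieldType.
Local Open Scope ring_scope.

Definition rate : R := 5/8.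

(* The potential of a letter: a factor carried by a letter as long as the
   position k0+1 places later, whose letter it constrains, is not filled. *)
Definition potential (a : nat * nat) : R :=
  if (a.1 == 1)%N then (if (a.2 == 2)%N then 9/10 else 13/20)
  else (if (a.2 == 3)%N then 4/5 else 5/4).

Lemma potential_ge0 a : 0 <= potential a.
Proof. by rewrite /potential; case: ifP => _; case: ifP => _; lra. Qed.

Lemma letters_ind (P : nat * nat -> Prop) :
  P (1,2)%N -> P (1,3)%N -> P (2,1)%N -> P (2,2)%N -> P (2,3)%N -> P (3,1)%N ->
  P (3,2)%N -> P (3,3)%N -> forall b, b \in letters -> P b.
Proof.
move=> h1 h2 h3 h4 h5 h6 h7 h8 b; rewrite !inE.
by do ![case/orP=> [/eqP->//|]]; move/eqP->.
Qed.

Ltac finite_check :=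
  rewrite /letters !big_cons big_nil /= /potential /rate !exprS !expr0 /=; lra.

(* The transfer inequality: the potential of b pays for all letters that may
   follow b at distance k0+1, each weighted by q^(its entries) and by its own
   potential (or by 1 when its own partner position lies beyond the word). *)
Lemma potential_transfer (b : nat * nat) (capped : bool) : b \in letters ->
  \sum_(a <- letters) (if compatible b a
     then rate ^+ (a.1 + a.2) * (if capped then potential a else 1) else 0)
  <= potential b.
Proof. by move: b; apply: letters_ind; case: capped; finite_check. Qed.

(* The same inequality with potential 1, for the positions up to k0, which have
   no predecessor at distance k0+1. *)
Lemma potential_start (capped first : bool) :
  \sum_(a <- letters) (if (a.1 == 1)%N == first
     then rate ^+ (a.1 + a.2) * (if capped then potential a else 1) else 0)
  <= 1.
Proof. by case: capped; case: first; finite_check. Qed.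

Lemma prod_window_split (F : nat -> R) (c k n : nat) :
  \prod_(0 <= t < n) (if (c <= t + k)%N then F t else 1) =
  (if (k <= c)%N && (c - k < n)%N then F (c - k)%N else 1) *
  \prod_(0 <= t < n) (if (c < t + k)%N then F t else 1).
Proof.
elim: n => [|n IH]; first by rewrite !big_geq // mulr1 ltn0 andbF.
rewrite !big_nat_recr //= IH.
have [<-|ne] := eqVneq (n + k)%N c.
  by rewrite leqnn leq_addl addnK ltnSn !ltnn /= mul1r mulr1 mulrC.
have -> : (c <= n + k)%N = (c < n + k)%N by rewrite leq_eqVlt eq_sym (negbTE ne).
rewrite -mulrA; congr (_ * _).
case: (boolP (k <= c)%N) => hk //=.
suff -> : (c - k < n.+1)%N = (c - k < n)%N by [].
rewrite ltnS leq_eqVlt orbC; case: eqP => [e|_]; last by rewrite orbF.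
by move: ne; rewrite -e subnK ?eqxx.
Qed.

Variables (n k0 : nat).

Definition capped_potential (t : nat) (a : nat * nat) : R :=
  if (t + k0.+1 < n)%N then potential a else 1.

(* The product of the potentials of those letters among the first s of w whose
   partner position t+k0+1 is at least c, ie. not yet filled when c = s. *)
Definition pending (c s : nat) (w : seq (nat * nat)) : R :=
  \prod_(0 <= t < s) (if (c <= t + k0.+1)%N then capped_potential t (nth (0,0) w t) else 1).

Definition mass (s : nat) : R :=
  \sum_(w <- words s) (if admissible k0 w then rate ^+ weight w * pending s s w else 0).

Lemma capped_potential_ge0 t a : 0 <= capped_potential t a.
Proof. by rewrite /capped_potential; case: ifP => _; [exact: potential_ge0|lra]. Qed.

Lemma pending_ge0 c s w : 0 <= pending c s w.
Proof.
by apply: prodr_ge0 => t _; case: ifP => _ //; exact: capped_potential_ge0.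
Qed.

Lemma pending_rcons s w a : size w = s ->
  pending s.+1 s.+1 (rcons w a) = pending s.+1 s w * capped_potential s a.
Proof.
move=> sw; rewrite /pending big_nat_recr //= addnS ltnS leq_addr nth_rcons sw ltnn eqxx.
by congr (_ * _); apply: eq_big_nat => t /andP[_ ht]; rewrite nth_rcons sw ht.
Qed.

Lemma pending_leave s w : pending s s w =
  (if (k0 < s)%N then capped_potential (s - k0.+1) (nth (0,0) w (s - k0.+1)) else 1)
  * pending s.+1 s w.
Proof.
rewrite /pending (prod_window_split (fun t => capped_potential t (nth (0,0) w t))).
case: (ltnP k0 s) => hk //=.
by have -> : (s - k0.+1 < s)%N by lia.
Qed.

Lemma next_letter_mass s w : (s < n)%N -> size w = s -> all (mem letters) w ->
  \sum_(a <- letters) (if admissible_at k0 (rcons w a) s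
                       then rate ^+ (a.1 + a.2) * capped_potential s a else 0)
  <= (if (k0 < s)%N then capped_potential (s - k0.+1) (nth (0,0) w (s - k0.+1)) else 1).
Proof.
move=> sn sw wL.
have adm_last a : admissible_at k0 (rcons w a) s =
    [&& (s < k0)%N ==> (a.1 != 1)%N, (s == k0) ==> (a.1 == 1)%N &
        (k0 < s)%N ==> compatible (nth (0,0) w (s - k0.+1)) a].
  rewrite /admissible_at nth_rcons sw ltnn eqxx; case: (ltnP k0 s) => hk //=.
  by rewrite nth_rcons sw; have -> : (s - k0.+1 < s)%N by lia.
rewrite {1}/capped_potential; case: (ltngtP s k0) => hk.
- apply: le_trans (potential_start (s + k0.+1 < n)%N false); apply: ler_sum => a _.
  by rewrite adm_last (ltn_eqF hk) hk (leq_gtF (ltnW hk)) /=; case: (a.1 == 1)%N.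
- have b_letter : nth (0,0) w (s - k0.+1) \in letters.
    by apply: (allP wL); apply: mem_nth; rewrite sw; lia.
  rewrite /capped_potential subnK // sn.
  apply: le_trans (potential_transfer (s + k0.+1 < n)%N b_letter); apply: ler_sum => a _.
  by rewrite adm_last (gtn_eqF hk) hk (leq_gtF (ltnW hk)).
- apply: le_trans (potential_start (s + k0.+1 < n)%N true); apply: ler_sum => a _.
  by rewrite adm_last hk ltnn eqxx /=; case: (a.1 == 1)%N.
Qed.

Lemma mass0 : mass 0 = 1.
Proof. by rewrite /mass big_seq1 /= /pending big_geq // /weight big_nil mulr1. Qed.

Lemma mass_step s : (s < n)%N -> mass s.+1 <= mass s.
Proof.
move=> sn; rewrite /mass -[words s.+1]/[seq rcons w a | w <- words s, a <- letters].
rewrite big_allpairs_dep big_seq [X in _ <= X]big_seq.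
apply: ler_sum => w; rewrite mem_words => /andP[/eqP sw wL].
have [adm|nadm] := boolP (admissible k0 w); last first.
  by rewrite big1 // => a _; rewrite admissible_rcons (negbTE nadm).
rewrite pending_leave mulrCA mulrC.
apply: le_trans (ler_wpM2l _ (next_letter_mass sn sw wL)); last first.
  by rewrite mulr_ge0 ?pending_ge0 // exprn_ge0 // /rate; lra.
rewrite big_distrr; apply: ler_sum => a _.
rewrite admissible_rcons adm sw /= pending_rcons // weight_rcons exprD.
by case: (admissible_at _ _ _); rewrite ?mulr0 // mulrACA.
Qed.

Lemma admissible_mass_le1 :
  \sum_(w <- words n) (if admissible k0 w then rate ^+ weight w else 0) <= 1.
Proof.
have mass_le1 s : (s <= n)%N -> mass s <= 1.
  elim: s => [|s IH] hs; first by rewrite mass0.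
  exact: le_trans (mass_step hs) (IH (ltnW hs)).
apply: le_trans (mass_le1 n (leqnn n)); apply: ler_sum => w _.
case: ifP => // _; rewrite /pending big1 ?mulr1 // => t _.
by case: ifP => // h; rewrite /capped_potential ltnNge h.
Qed.

End Transfer.

Record frob3m (gap : nat -> bool) (m : nat) : Prop := Frob3m {
  zero_not_gap : ~~ gap 0;
  not_gap_add : forall a b, ~~ gap a -> ~~ gap b -> ~~ gap (a + b);
  gap_below_mult : forall j, 0 < j < m -> gap j;
  mult_not_gap : ~~ gap m;
  frob_gap : gap (3 * m - 1);
  gap_le_frob : forall y, gap y -> y <= 3 * m - 1;
  mult_gt0 : 0 < m }.

Section Kunz.
Variables (gap : nat -> bool) (m : nat).
Hypothesis S : frob3m gap m.

(* m = 1 would make every number an element of S. *)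
Lemma mult_gt1 : 1 < m.
Proof.
have := not_gap_add S (mult_not_gap S) (mult_not_gap S).
move: (mult_gt0 S) (mult_not_gap S) (frob_gap S); case: m => [|[|n]] //.
by move=> _ _ ->.
Qed.

Lemma gap_mult j : ~~ gap (j * m).
Proof.
elim: j => [|j IH]; first exact: zero_not_gap S.
by rewrite mulSn; exact (not_gap_add S (mult_not_gap S) IH).
Qed.

Lemma gap_subm y : gap (y + m) -> gap y.
Proof. by apply: contraLR => h; exact (not_gap_add S h (mult_not_gap S)). Qed.

Lemma gap_sub2m i : gap (i + 2 * m) -> gap (i + m).
Proof. by move=> h; apply: gap_subm; rewrite -addnA addnn -mul2n. Qed.

(* The Kunz coordinate x_i of the residue i: i + x_i m is the least element
   of S congruent to i, so x_i - 1 gaps lie above i in its residue class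
   (the element i + 3m is never a gap since 3m-1 is the largest one). *)
Definition kunz (i : nat) : nat := 1 + gap (i + m) + gap (i + 2 * m).

Lemma kunz_eq3 i : (kunz i == 3) = gap (i + 2 * m).
Proof.
rewrite /kunz; case: (boolP (gap (i + 2 * m))) => h; first by rewrite (gap_sub2m h).
by case: (gap (i + m)).
Qed.

Lemma kunz_eq1 i : (kunz i == 1) = ~~ gap (i + m).
Proof.
rewrite /kunz; case: (boolP (gap (i + m))) => h /=; first by case: (gap (i + 2 * m)).
by rewrite (negbTE (contra (@gap_sub2m i) h)).
Qed.

Lemma kunz_ge2 i : (2 <= kunz i) = gap (i + m).
Proof.
rewrite /kunz; case: (boolP (gap (i + m))) => h //=.
by rewrite (negbTE (contra (@gap_sub2m i) h)).
Qed.

Lemma kunz_bounds i : 1 <= kunz i <= 3.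
Proof. by rewrite /kunz; case: (gap _); case: (gap _). Qed.

Lemma kunz_last : kunz (m - 1) = 3.
Proof.
have e : m - 1 + 2 * m = 3 * m - 1 by have := mult_gt1; lia.
by apply/eqP; rewrite kunz_eq3 e (frob_gap S).
Qed.

Definition gap_of_kunz (x : nat -> nat) (y : nat) : bool :=
  (y %% m != 0) &&
  (if y %/ m == 0 then true else if y %/ m == 1 then 2 <= x (y %% m)
   else if y %/ m == 2 then x (y %% m) == 3 else false).

Lemma gap_kunz y : gap y = gap_of_kunz kunz y.
Proof.
rewrite /gap_of_kunz.
have ey : y = y %/ m * m + y %% m by rewrite -divn_eq.
have hi : y %% m < m by rewrite ltn_pmod // (mult_gt0 S).
case: (eqVneq (y %% m) 0) => hi0 /=.
  by apply/negbTE; rewrite ey hi0 addn0 gap_mult.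
case: (eqVneq (y %/ m) 0) => hj0.
  by rewrite ey hj0 mul0n add0n (gap_below_mult S) // lt0n hi0.
case: (eqVneq (y %/ m) 1) => hj1.
  by rewrite kunz_ge2 {1}ey hj1 mul1n addnC.
case: (eqVneq (y %/ m) 2) => hj2.
  by rewrite kunz_eq3 {1}ey hj2 addnC mulnC.
have h3 : 3 <= y %/ m by move: hj0 hj1 hj2; case: (y %/ m) => [|[|[|]]].
have h3m : 3 * m <= y.
  by rewrite {1}ey; apply: leq_trans (leq_addr _ _); rewrite leq_mul2r h3 orbT.
by apply/negbTE/negP => /(gap_le_frob S); lia.
Qed.

(* Folding the composition x_1 + ... + x_(m-1): the residues i and m-1-i
   (i = 1 .. (m-2)/2) are paired into one letter; x_(m-1) = 3 is known and
   for odd m the middle coordinate x_((m-1)/2) is left over. *)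
Definition npairs : nat := (m - 2)./2.

Definition folded : seq (nat * nat) :=
  [seq (kunz t.+1, kunz (m - 2 - t)) | t <- iota 0 npairs].

(* The first position k0 whose letter starts with 1, ie. the least pairing
   index i = k0+1 with i + m in S. *)
Definition first_one : nat := find (fun p : nat * nat => p.1 == 1) folded.

(* The coordinate left out of the pairing when m is odd. *)
Definition middle : nat := kunz (m - 1)./2.

Lemma size_folded : size folded = npairs.
Proof. by rewrite size_map size_iota. Qed.

Lemma nth_folded t : t < npairs -> nth (0,0) folded t = (kunz t.+1, kunz (m - 2 - t)).
Proof. by move=> ht; rewrite (nth_map 0) ?size_iota // nth_iota. Qed.

(* No letter is (1,1): otherwise (t+1) + m and (m-2-t) + m would both lie in
   S, but their sum is the Frobenius number. *)
Lemma folded_letter t : t < npairs -> nth (0,0) folded t \in letters.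
Proof.
move=> ht; rewrite nth_folded //.
have := kunz_bounds t.+1; have := kunz_bounds (m - 2 - t).
have no11 : ~~ ((kunz t.+1 == 1) && (kunz (m - 2 - t) == 1)).
  rewrite !kunz_eq1; apply/negP => /andP[h1 h2]; have := not_gap_add S h1 h2.
  have -> : t.+1 + m + (m - 2 - t + m) = 3 * m - 1 by rewrite /npairs in ht; lia.
  by rewrite (frob_gap S).
move: no11; case: (kunz t.+1) => [|[|[|[|u]]]] //; case: (kunz _) => [|[|[|[|v]]]] //.
Qed.

Lemma folded_in_words : folded \in words npairs.
Proof.
rewrite mem_words size_folded eqxx /=; apply/(all_nthP (0,0)) => t.
by rewrite size_folded; exact: folded_letter.
Qed.

(* Adding the element (first_one+1) + m of S to elements i + m of S shows
   that the folded word is admissible. *)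
Lemma folded_admissible : admissible first_one folded.
Proof.
apply/allP => t; rewrite mem_iota add0n size_folded => /andP[_ ht].
apply/and3P; split; apply/implyP.
- by move=> htk; have := before_find (0,0) htk; rewrite /= => ->.
- move=> /eqP htk.
  have hk : has (fun p : nat * nat => p.1 == 1) folded.
    by rewrite has_find -/first_one -htk size_folded.
  by rewrite htk; exact: (nth_find (0,0) hk).
- move=> hkt; have hkn : first_one < npairs by apply: ltn_trans hkt ht.
  have hk : has (fun p : nat * nat => p.1 == 1) folded.
    by rewrite has_find -/first_one size_folded.
  have := nth_find (0,0) hk; rewrite -/first_one nth_folded //= kunz_eq1 => gk.
  set t' := t - first_one.+1.
  have ht' : t' < npairs by rewrite /t'; lia.
  rewrite !nth_folded //= /compatible /=.
  apply/andP; split; apply/negP => /andP[h3 h1]; rewrite kunz_eq1 in h1;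
    rewrite kunz_eq3 in h3; have := not_gap_add S h1 gk.
  + have -> : t'.+1 + m + (first_one.+1 + m) = t.+1 + 2 * m by rewrite /t'; lia.
    by rewrite h3.
  + have -> : m - 2 - t + m + (first_one.+1 + m) = m - 2 - t' + 2 * m.
      by rewrite /t' /npairs in ht ht' *; lia.
    by rewrite h3.
Qed.

(* The residues covered by the folded word, and the points i + j m (j < 3) of
   their residue classes among which its weight counts the gaps. *)
Definition folded_residues : seq nat :=
  [seq t.+1 | t <- iota 0 npairs] ++ [seq m - 2 - t | t <- iota 0 npairs].

Definition folded_points : seq nat := [seq i + j * m | i <- folded_residues, j <- iota 0 3].

(* The folded residues are distinct nonzero residues mod m, so the folded
   points are pairwise distinct. *)
Lemma folded_residue_range i : i \in folded_residues -> 0 < i < m.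
Proof.
have := mult_gt1; rewrite mem_cat => m1 /orP[] /mapP[t];
  rewrite mem_iota add0n /npairs => /andP[_ ht] ->; lia.
Qed.

Lemma uniq_folded_residues : uniq folded_residues.
Proof.
rewrite cat_uniq; apply/and3P; split.
- by rewrite map_inj_uniq ?iota_uniq // => a b [].
- apply/hasPn => x /mapP[t]; rewrite mem_iota add0n => /andP[_ ht] ->.
  apply/negP => /mapP[t']; rewrite mem_iota add0n /npairs in ht * => /andP[_ ht'].
  lia.
- rewrite map_inj_in_uniq ?iota_uniq // => a b; rewrite !mem_iota !add0n /npairs.
  move=> /andP[_ ha] /andP[_ hb]; lia.
Qed.

Lemma uniq_folded_points : uniq folded_points.
Proof.
apply: allpairs_uniq; [exact: uniq_folded_residues | exact: iota_uniq |].
move=> [i j] [i' j'] /allpairsP[[a b] [ha _ [-> ->]]] /allpairsP[[a' b'] [ha' _ [-> ->]]] /= e.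
have /andP[_ am] := folded_residue_range ha; have /andP[_ a'm] := folded_residue_range ha'.
have m0 : 0 < m by exact: (mult_gt0 S).
have ea : a = a'.
  by have := congr1 (modn^~ m) e; rewrite ![_ + _ * m]addnC !modnMDl !modn_small.
subst a'; have := congr1 (divn^~ m) e.
by rewrite ![_ + _ * m]addnC !divnMDl // divn_small // !addn0 => ->.
Qed.

Lemma kunz_count i : 0 < i < m -> kunz i = count gap [seq i + j * m | j <- iota 0 3].
Proof.
move=> hi; rewrite /= mul0n mul1n addn0 (gap_below_mult S hi) /kunz.
by case: (gap _); case: (gap _).
Qed.

Lemma weight_folded : weight folded = count gap folded_points.
Proof.
have -> : weight folded = \sum_(i <- folded_residues) kunz i.
  by rewrite /weight big_map /folded_residues big_cat !big_map big_split.
rewrite /folded_points count_flatten sumnE !big_map; apply: eq_big_seq => i hi.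
exact: kunz_count (folded_residue_range hi).
Qed.

End Kunz.

Lemma gap_determined gap1 gap2 m : frob3m gap1 m -> frob3m gap2 m ->
  folded gap1 m = folded gap2 m -> middle gap1 m = middle gap2 m -> gap1 =1 gap2.
Proof.
move=> S1 S2 ew em y; rewrite (gap_kunz S1) (gap_kunz S2) /gap_of_kunz.
suff ex i : 0 < i < m -> kunz gap1 m i = kunz gap2 m i.
  case: (eqVneq (y %% m) 0) => [->|hne] //=.
  by rewrite ex // lt0n hne ltn_pmod // (mult_gt0 S1).
move=> /andP[hi0 him]; have hm2 := mult_gt1 S1.
have [->|hne] := eqVneq i (m - 1); first by rewrite !kunz_last.
have [h1|h1] := leqP i (npairs m).
  have ht : i.-1 < npairs m by lia.
  have := congr1 (fun w => (nth (0,0) w i.-1).1) ew.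
  by rewrite /= !nth_folded //= prednK.
have [h2|h2] := leqP (m - 1 - npairs m) i.
  have ht : m - 2 - i < npairs m by rewrite /npairs in h1 h2 *; lia.
  have := congr1 (fun w => (nth (0,0) w (m - 2 - i)).2) ew; rewrite /= !nth_folded //=.
  by have -> : m - 2 - (m - 2 - i) = i by lia.
by have -> : i = (m - 1)./2 by rewrite /npairs in h1 h2; lia.
Qed.

Section GapSets.
Variable N : nat.
Implicit Types (G : {set 'I_N}).

Lemma in_gapP G n : reflect (exists2 i, i \in G & val i = n) (in_gap G n).
Proof.
apply: (iffP existsP) => [[i /andP[iG /eqP e]]|[i iG e]]; first by exists i.
by exists i; rewrite iG e eqxx.
Qed.

Lemma in_gap_lt G n : in_gap G n -> n < N.
Proof. by case/in_gapP => i _ <-; exact: ltn_ord. Qed.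

Lemma in_gap_ord G (i : 'I_N) : in_gap G i = (i \in G).
Proof.
apply/in_gapP/idP => [[j jG ej]|iG]; last by exists i.
by rewrite (_ : i = j) //; apply: val_inj.
Qed.

Lemma frob3m_of_gapset G (m : 'I_N.+1) : nsg_gapset G -> is_multiplicity G m ->
  is_frobenius G (3 * m - 1) -> frob3m (in_gap G) m.
Proof.
move=> /andP[h0 /forallP hadd] /and3P[m0 mS /forallP mlow] /andP[hf /forallP hbig].
have hmN : m <= N by rewrite -ltnS ltn_ord.
split => //.
- move=> a b ha hb; apply/negP => gab; have abN := in_gap_lt gab.
  have aN : a < N by apply: leq_ltn_trans abN; exact: leq_addr.
  have bN : b < N by apply: leq_ltn_trans abN; exact: leq_addl.
  have := hadd (Ordinal aN) => /forallP /(_ (Ordinal bN)) /=.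
  by rewrite ha hb gab.
- move=> j hj; have hjN : j < N by case/andP: hj => _ h; exact: leq_trans h hmN.
  by have := mlow (Ordinal hjN); rewrite /= hj.
- move=> y hy; have hyN := in_gap_lt hy.
  by have := hbig (Ordinal hyN); rewrite /= hy.
Qed.

Lemma count_gap_le G s : uniq s -> count (in_gap G) s <= #|G|.
Proof.
move=> us; rewrite -size_filter cardE -(size_map val).
apply: uniq_leq_size; first exact: filter_uniq.
move=> y; rewrite mem_filter => /andP[/in_gapP[i iG <-] _].
by apply: map_f; rewrite mem_enum.
Qed.

End GapSets.

Local Open Scope ring_scope.

Lemma sum_injective_le (R : numDomainType) (T : finType) (K : eqType)
    (P : pred T) (f : T -> K) (s : seq K) (h : K -> R) :
  {in P &, injective f} -> (forall x, P x -> f x \in s) -> uniq s ->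
  (forall y, 0 <= h y) ->
  \sum_(x | P x) h (f x) <= \sum_(y <- s) h y.
Proof.
move=> finj fs us h0.
rewrite -big_filter -(big_map f predT h); set s0 := map f _.
have us0 : uniq s0.
  rewrite map_inj_in_uniq ?filter_uniq ?index_enum_uniq //.
  by move=> x y; rewrite !mem_filter => /andP[px _] /andP[py _]; apply: finj.
rewrite [X in _ <= X](bigID (mem s0) predT) /= -[X in X <= _]addr0.
apply: lerD; last by apply: sumr_ge0 => y _; exact: h0.
have ps : perm_eq [seq y <- s | y \in s0] s0.
  apply: uniq_perm => //; first exact: filter_uniq.
  move=> y; rewrite mem_filter; apply/andP/idP => [[]//|ys0]; split => //.
  by move: ys0 => /mapP[x]; rewrite mem_filter => /andP[px _] ->; apply: fs.
by rewrite -[X in _ <= X]big_filter (perm_big _ ps).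
Qed.

Section Count.
Variable g : nat.
Local Notation N := (3 * g + 3)%N.

Definition frob3m_sets := [set G : {set 'I_N} |
  [&& nsg_gapset G, #|G| == g & frob_is_3m_minus_1 G]].

Definition mult_of (G : {set 'I_N}) : nat :=
  if [pick m : 'I_N.+1 | is_multiplicity G m && is_frobenius G (3 * m - 1)]
  is Some m then val m else 0.

Lemma mult_of_spec G : G \in frob3m_sets ->
  frob3m (in_gap G) (mult_of G) /\ (mult_of G <= N)%N.
Proof.
rewrite inE => /and3P[hn _ /existsP[m0 hm0]].
rewrite /mult_of; case: pickP => [m /andP[h1 h2]|/(_ m0)]; last by rewrite hm0.
by split; [exact: frob3m_of_gapset | rewrite -ltnS ltn_ord].
Qed.

Definition word_of G := folded (in_gap G) (mult_of G).

(* Besides its folded word, a semigroup is determined by the key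
   (m, position of the first 1, middle coordinate), which takes at most
   (N+1)^2 * 4 values. *)
Definition key_of G : 'I_N.+1 * 'I_N.+1 * 'I_4 :=
  (inord (mult_of G), inord (first_one (in_gap G) (mult_of G)),
   inord (middle (in_gap G) (mult_of G))).

Lemma key_of_val G : G \in frob3m_sets ->
  [/\ val (key_of G).1.1 = mult_of G, val (key_of G).1.2 = first_one (in_gap G) (mult_of G)
    & val (key_of G).2 = middle (in_gap G) (mult_of G)].
Proof.
move=> hG; have [S mN] := mult_of_spec hG.
rewrite /key_of /= !inordK // ?ltnS //.
- by case/andP: (kunz_bounds (in_gap G) (mult_of G) ((mult_of G - 1)./2)).
- by apply: leq_trans (find_size _ _) _; rewrite size_folded /npairs; lia.
Qed.

Lemma weight_word_of_le G : G \in frob3m_sets -> (weight (word_of G) <= g)%N.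
Proof.
move=> hG; have [S _] := mult_of_spec hG.
move: hG; rewrite inE => /and3P[_ /eqP gG _].
rewrite -[X in (_ <= X)%N]gG /word_of (weight_folded S).
exact: count_gap_le (uniq_folded_points S).
Qed.

Lemma key_word_inj G1 G2 : G1 \in frob3m_sets -> G2 \in frob3m_sets ->
  key_of G1 = key_of G2 -> word_of G1 = word_of G2 -> G1 = G2.
Proof.
move=> h1 h2 ek ew.
have [S1 _] := mult_of_spec h1; have [S2 _] := mult_of_spec h2.
have [m1 _ mid1] := key_of_val h1; have [m2 _ mid2] := key_of_val h2.
have em : mult_of G1 = mult_of G2 by rewrite -m1 -m2 ek.
have emid : middle (in_gap G1) (mult_of G1) = middle (in_gap G2) (mult_of G2).
  by rewrite -mid1 -mid2 ek.
move: S1 ew emid; rewrite /word_of em => S1 ew emid.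
have e := gap_determined S1 S2 ew emid.
by apply/setP => i; rewrite -!in_gap_ord e.
Qed.

(* Within one fibre of the key, the injectivity above and the transfer bound
   give total q-weight at most 1. *)
Lemma fiber_mass_le1 (R : realFieldType) j :
  \sum_(G in frob3m_sets | key_of G == j) rate R ^+ weight (word_of G) <= 1.
Proof.
set m := val j.1.1; set k0 := val j.1.2.
apply: le_trans (admissible_mass_le1 R (npairs m) k0).
rewrite (eq_bigr (fun G => (fun w => if admissible k0 w then rate R ^+ weight w else 0)
                              (word_of G))); last first.
  move=> G /andP[hG /eqP hk]; have [S _] := mult_of_spec hG.
  have [_ e _] := key_of_val hG.
  by rewrite /= /word_of /k0 -hk e (folded_admissible S).
apply: sum_injective_le.
- move=> G1 G2 /andP[h1 /eqP k1] /andP[h2 /eqP k2].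
  by apply: key_word_inj; rewrite ?k1 ?k2.
- move=> G /andP[hG /eqP hk]; have [S _] := mult_of_spec hG.
  have [e _ _] := key_of_val hG.
  by rewrite /word_of /m -hk e (folded_in_words S).
- exact: uniq_words.
- by move=> w; case: ifP => // _; apply: exprn_ge0; rewrite /rate; lra.
Qed.

Lemma tilde_c_le (R : realFieldType) :
  (tilde_c g)%:R <= (8/5 : R) ^+ g * ((N.+1 * N.+1 * 4)%N)%:R.
Proof.
rewrite /tilde_c -/frob3m_sets -sum1_card natr_sum.
have pow_ge0 : 0 <= (8/5 : R) ^+ g by apply: exprn_ge0; lra.
have one_le G : G \in frob3m_sets -> 1 <= (8/5 : R) ^+ g * rate R ^+ weight (word_of G).
  move=> hG; have q1 : (8/5 : R) ^+ g * rate R ^+ g = 1.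
    by rewrite -exprMn /rate (_ : 8/5 * (5/8) = 1 :> R) ?expr1n //; field.
  rewrite -[X in X <= _]q1 ler_pM2l; last by apply: exprn_gt0; lra.
  by apply: ler_wiXn2l (weight_word_of_le hG); rewrite /rate; lra.
apply: le_trans (_ : _ <= (8/5 : R) ^+ g * \sum_(G in frob3m_sets) rate R ^+ weight (word_of G)) _.
  by rewrite mulr_sumr; apply: ler_sum => G hG; apply: one_le.
apply: ler_wpM2l => //.
rewrite (_ : (N.+1 * N.+1 * 4)%N = #|{: 'I_N.+1 * 'I_N.+1 * 'I_4}|); last first.
  by rewrite !card_prod !card_ord.
rewrite (partition_big key_of predT) //= -sum1_card natr_sum.
by apply: ler_sum => j _; exact: fiber_mass_le1.
Qed.

End Count.

Lemma bernoulli_ineq (R : realFieldType) (x : R) n : 0 <= x -> 1 + n%:R * x <= (1 + x) ^+ n.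
Proof.
move=> x0; elim: n => [|n IH]; first by rewrite mul0r addr0 expr0.
rewrite exprS -natr1; apply: le_trans (ler_wpM2l _ IH); last by lra.
have : 0 <= n%:R * x * x by rewrite !mulr_ge0.
lra.
Qed.

(* The polynomial factor (N+1)^2 * 4, N = 3g+3, is eventually absorbed by
   (161/160)^g: write g >= 3j and use (161/160)^(3j) >= (1 + j/160)^3. *)
Lemma poly_le_geometric (R : realFieldType) (g : nat) :
  3 * (1444 * 160 ^+ 3) + 3 <= (g%:R : R) ->
  (((3 * g + 3).+1 * (3 * g + 3).+1 * 4)%N)%:R <= (161/160 : R) ^+ g.
Proof.
(* Name the constants as opaque variables, so that lra treats them as atoms. *)
have [c ec] : exists c : R, c = 160 ^+ 3 by eexists.
rewrite -ec => hg.
have [jn ejn] : exists jn, jn = (g %/ 3)%N by eexists.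
have [j ej] : exists j : R, j = jn%:R by eexists.
have gj : (g%:R : R) <= 3 * j + 2.
  have : (g <= 3 * jn + 2)%N by lia.
  by rewrite -(ler_nat R) natrD natrM -ej.
have c1 : 1 <= c by rewrite ec; apply: exprn_ege1; lra.
have cj : 1444 * c <= j by lra.
apply: (@le_trans _ _ ((161/160 : R) ^+ (jn * 3))); last first.
  by rewrite ler_eXn2l; [lia | lra].
rewrite exprM.
have bern : 1 + j * (1/160) <= (161/160 : R) ^+ jn.
  by rewrite ej (_ : (161/160 : R) = 1 + 1/160); [exact: bernoulli_ineq | lra].
apply: le_trans (lerXn2r 3 _ _ bern); rewrite ?nnegrE; [|lra|lra].
apply: (@le_trans _ _ (j ^+ 3 / c)); last first.
  rewrite ec -expr_div_n; apply: lerXn2r; rewrite ?nnegrE; lra.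
rewrite ler_pdivlMr; last lra.
rewrite -addnS !natrM natrD natrM.
have sq : ((3 * g%:R + 4%:R) * (3 * g%:R + 4%:R) * 4%:R : R) <= 1444 * j ^+ 2.
  rewrite expr2; nra.
apply: le_trans (ler_wpM2r _ sq) _; first lra.
rewrite (_ : 1444 * j ^+ 2 * c = j ^+ 2 * (1444 * c)); last by ring.
rewrite (_ : j ^+ 3 = j ^+ 2 * j); last by ring.
by apply: ler_wpM2l => //; rewrite exprn_ge0 //; lra.
Qed.

(* Hence c~_g <= 1.61^g for all large g, as 8/5 * 161/160 = 161/100. *)
Lemma tilde_c_eventually_le (R : realFieldType) :
  exists N0, forall g, (N0 <= g)%N -> (tilde_c g)%:R <= (161/100 : R) ^+ g.
Proof.
have [N0 hN0] : exists N0 : nat, (3 * (1444 * 160 ^+ 3) + 3 : R) <= N0%:R.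
  exists (3 * (1444 * 160 ^ 3) + 3)%N.
  by rewrite natrD natrM natrM natrX.
exists N0 => g hg; apply: le_trans (tilde_c_le g R) _.
rewrite (_ : (161/100 : R) = 8/5 * (161/160)); last by field.
rewrite [X in _ <= X]exprMn; apply: ler_wpM2l; first by apply: exprn_ge0; lra.
by apply: poly_le_geometric; apply: le_trans hN0 _; rewrite ler_nat.
Qed.

Lemma limn_esup_le_eventually (R : realType) (u : nat -> \bar R) (M : \bar R) N0 :
  (forall n, (N0 <= n)%N -> (u n <= M)%E) -> (limn_esup u <= M)%E.
Proof.
move=> hu; rewrite limn_esup_lim.
have -> : limn (esups u) = ereal_inf (range (esups u)).
  by apply: cvg_lim => //; exact: cvg_esups_inf.
apply: (@le_trans _ _ (esups u N0)); first by apply: ereal_inf_lbound; exists N0.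
by apply: ge_ereal_sup => _ [k hk <-]; exact: hu.
Qed.

Lemma powR_inv_le (R : realType) (c r : R) (g : nat) :
  (0 < g)%N -> 0 <= c -> 0 <= r -> c <= r ^+ g -> c `^ (g%:R^-1) <= r.
Proof.
move=> g0 c0 r0 crg; have gR : 0 < (g%:R : R) by rewrite ltr0n.
apply: le_trans (@ge0_ler_powR R (g%:R^-1) _ _ _ _ _ crg) _.
- by rewrite invr_ge0 ltW.
- by rewrite nnegrE.
- by rewrite nnegrE exprn_ge0.
by rewrite -powR_mulrn // -powRrM mulfV ?powRr1 // gt_eqF.
Qed.

Lemma golden_ratio_gt (R : realType) : (161/100 : R) < (1 + Num.sqrt 5) / 2.
Proof.
have h0 : 0 <= Num.sqrt (5 : R) by exact: sqrtr_ge0.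
have h1 : Num.sqrt (5 : R) * Num.sqrt 5 = 5 by rewrite -expr2 sqr_sqrtr //; lra.
nra.
Qed.

Local Open Scope ereal_scope.

Theorem theorem13p2 (R : realType) :
  limn_esup (fun g : nat => ((tilde_c g)%:R `^ (g%:R^-1) : R)%:E)
    < ((1 + Num.sqrt 5) / 2 : R)%:E.
Proof.
have [N0 hN0] := tilde_c_eventually_le R.
apply: (@le_lt_trans _ _ (161/100 : R)%:E); last by rewrite lte_fin golden_ratio_gt.
apply: (@limn_esup_le_eventually _ _ _ N0.+1) => g hg; rewrite lee_fin.
apply: powR_inv_le; [lia | by [] | lra |].
by apply: hN0; lia.
Qed.
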